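(* Let $N_n$ be a noisy discrete memoryless classical channel whose confusability graph $G(N_n)$, with $n$ vertices, is isomorphic to an exclusivity graph $\mathcal{G}$ satisfying $\mathscr{C}_\mathcal{G}=\mathscr{Q}_\mathcal{G}$. Then the vertex-encoding protocol with a perfect $d$-level quantum channel (for any $d$ for which it can be implemented) does not exhibit one-shot zero-error superadditivity; that is, $n\le \alpha(G(N_n))\, d$.
   Context: A discrete memoryless classical channel $N$ has finite input alphabet $\mathcal{X}$, finite output alphabet $\mathcal{Y}$ and conditional probabilities $P(y|x)$. Distinct inputs $x,x'$ are confusable if some output $y$ has $P(y|x)>0$ and $P(y|x')>0$; the confusability graph $G(N)$ has vertex set $\mathcal{X}$ and edges between distinct confusable inputs, and $\alpha(G(N))$ (its independence number) is the one-shot zero-error capacity of $N$. For each output $y$, the hyperedge $h_y=\{x: P(y|x)>0\}$. A perfect $d$-level quantum channel is the identity channel on states of $\mathbb{C}^d$, with one-shot zero-error capacity $d$. The vertex-encoding protocol with a perfect $d$-level quantum channel: one assigns to every input $v\in\mathcal{X}$ a unit vector $\ket{\psi_v}\in\mathbb{C}^d$ such that $\ket{\psi_v}\perp\ket{\psi_w}$ whenever $v,w$ are adjacent in $G(N)$ (an orthogonal representation of $G(N)$ in $\mathbb{C}^d$). Messages are identified with the $n=|\mathcal{X}|$ inputs; to send $v$, the sender inputs $v$ into $N$ and sends $\ket{\psi_v}$ through the perfect quantum channel; upon seeing output $y$, the receiver performs a projective measurement containing the projectors $\ket{\psi_w}\!\bra{\psi_w}$, $w\in h_y$ (completed to the identity),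 which identifies $v$ with certainty. The protocol thus transmits $n$ messages with zero error, and it is said to exhibit one-shot zero-error superadditivity if $n>\alpha(G(N))\cdot d$. Exclusivity graph framework: for a finite graph $\mathcal{G}$ with vertex set $V_\mathcal{G}$ and edge set $E_\mathcal{G}$, a behavior is a map $p:V_\mathcal{G}\to[0,1]$ with $p(v)+p(v')\le 1$ for all edges $\{v,v'\}$. It is classical if there is a probability space $(\Omega,\Sigma,\mu)$ and sets $A_v\in\Sigma$ with $A_v\cap A_{v'}=\varnothing$ for all edges $\{v,v'\}$ and $p(v)=\mu(A_v)$; $\mathscr{C}_\mathcal{G}$ is the set of classical behaviors. It is quantum if there are a Hilbert space $\mathcal{H}$, a density operator $\rho$ and projectors $\Pi_v$ with $\Pi_v\Pi_{v'}=0$ for all edges $\{v,v'\}$ and $p(v)=\mathrm{Tr}(\rho\Pi_v)$; $\mathscr{Q}_\mathcal{G}$ is the set of quantum behaviors. *)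

From HB Require Import structures.
From mathcomp Require Import all_boot all_order all_algebra.
From mathcomp Require Import all_classical all_reals all_analysis.
From mathcomp Require Import complex.

Set Implicit Arguments.
Unset Strict Implicit.
Unset Printing Implicit Defensive.

Import Order.TTheory GRing.Theory Num.Theory.
Local Open Scope ring_scope.

(* P x y = P(y|x): a stochastic matrix from inputs X to outputs Y. *)
Definition is_channel (R : realType) (X Y : finType) (P : X -> Y -> R) : Prop :=
  (forall x y, 0 <= P x y) /\ (forall x, \sum_(y : Y) P x y = 1).

Definition confusable (R : realType) (X Y : finType) (P : X -> Y -> R) : rel X :=
  fun x x' => (x != x') && [exists y : Y, (0 < P x y) && (0 < P x' y)].

Definition independent (T : finType) (e : rel T) (S : {set T}) : bool :=
  [forall x in S, forall y in S, ~~ e x y].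

Definition independence_number (T : finType) (e : rel T) : nat :=
  \max_(S : {set T} | independent e S) #|S|.

Definition graph_iso (T1 T2 : finType) (e1 : rel T1) (e2 : rel T2) : Prop :=
  exists f : T1 -> T2, bijective f /\ forall x y, e1 x y = e2 (f x) (f y).

Definition behavior (R : realType) (V : finType) (e : rel V) (p : V -> R) : Prop :=
  (forall v, 0 <= p v <= 1) /\ (forall v w, e v w -> p v + p w <= 1).

Definition classical_behavior (R : realType) (V : finType) (e : rel V)
    (p : V -> R) : Prop :=
  behavior e p /\
  exists (d : measure_display) (T : measurableType d) (mu : probability T R)
         (A : V -> set T),
    (forall v, measurable (A v)) /\
    (forall v w, e v w -> (A v `&` A w = set0)%classic) /\
    (forall v, mu (A v) = (p v)%:E).

Definition adjmx (R : realType) (m n : nat) (A : 'M[R[i]]_(m, n)) : 'M[R[i]]_(n, m) :=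
  map_mx Num.conj A^T.

Definition is_hermitian (R : realType) (m : nat) (A : 'M[R[i]]_m) : Prop :=
  adjmx A = A.

Definition is_density (R : realType) (m : nat) (rho : 'M[R[i]]_m) : Prop :=
  is_hermitian rho /\
  (forall u : 'cV[R[i]]_m, 0 <= (adjmx u *m rho *m u) 0 0) /\
  \tr rho = 1.

Definition is_projector (R : realType) (m : nat) (Pi : 'M[R[i]]_m) : Prop :=
  is_hermitian Pi /\ Pi *m Pi = Pi.

Definition quantum_behavior (R : realType) (V : finType) (e : rel V)
    (p : V -> R) : Prop :=
  behavior e p /\
  exists (m : nat) (rho : 'M[R[i]]_m) (Pi : V -> 'M[R[i]]_m),
    is_density rho /\
    (forall v, is_projector (Pi v)) /\
    (forall v w, e v w -> Pi v *m Pi w = 0) /\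
    (forall v, \tr (rho *m Pi v) = ((p v)%:C)%C).

Definition classical_eq_quantum (R : realType) (V : finType) (e : rel V) : Prop :=
  forall p : V -> R, classical_behavior e p <-> quantum_behavior e p.

(* orthogonal representation of (X, e) by unit vectors of C^d:
   exactly the data needed to implement the vertex-encoding protocol
   with a perfect d-level quantum channel *)
Definition orthogonal_representation (R : realType) (X : finType) (e : rel X)
    (d : nat) (psi : X -> 'cV[R[i]]_d) : Prop :=
  (forall v, (adjmx (psi v) *m psi v) 0 0 = 1) /\
  (forall v w, e v w -> (adjmx (psi v) *m psi w) 0 0 = 0).

From HB Require Import structures.
From mathcomp Require Import all_boot all_order all_algebra.
From mathcomp Require Import all_classical all_reals all_analysis.
From mathcomp Require Import complex measurable_realfun.

(* Sending [v] through the quantum channel prepares the projector onto [psi v];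
   with the maximally mixed state [1/d] these projectors realise the uniform
   behaviour [v |-> 1/d], which is quantum and hence, by hypothesis, classical.
   A classical behaviour is carried by events that are disjoint along edges, so
   at every sample point the events that occur form an independent set:
   integrating their number gives [n / d <= alpha]. *)

Set Implicit Arguments.
Unset Strict Implicit.
Unset Printing Implicit Defensive.

Import Order.TTheory GRing.Theory Num.Theory.
Local Open Scope ring_scope.

Section ComplexMatrices.
Variable R : realType.
Local Notation C := R[i].

Lemma adjmxK m n (A : 'M[C]_(m, n)) : adjmx (adjmx A) = A.
Proof. by apply/matrixP=> i j; rewrite !mxE conjCK. Qed.

Lemma adjmxM m n p (A : 'M[C]_(m, n)) (B : 'M[C]_(n, p)) :
  adjmx (A *m B) = adjmx B *m adjmx A.
Proof.
apply/matrixP=> i j; rewrite !mxE rmorph_sum; apply: eq_bigr => k _.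
by rewrite !mxE rmorphM mulrC.
Qed.

Lemma adjmx_scalar_real n (c : C) :
  c \is Num.real -> adjmx (c%:M : 'M[C]_n) = c%:M.
Proof.
move=> /CrealP c_real; apply/matrixP=> i j; rewrite !mxE eq_sym.
by case: (i == j); rewrite ?mulr1n ?mulr0n ?c_real ?conjC0.
Qed.

Lemma adjmx_mul_ge0 d (u : 'cV[C]_d) : 0 <= (adjmx u *m u) 0 0.
Proof.
rewrite mxE; apply: sumr_ge0 => k _; rewrite !mxE mulrC; exact: mul_conjC_ge0.
Qed.

Section UnitVector.
Variables (d : nat) (psi : 'cV[C]_d).
Hypothesis psi_unit : (adjmx psi *m psi) 0 0 = 1.

Lemma adjmx_mul_unit : adjmx psi *m psi = 1%:M.
Proof. by apply/matrixP=> i j; rewrite !ord1 psi_unit mxE. Qed.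

Lemma unit_vector_dim_gt0 : (0 < d)%N.
Proof.
case: d psi psi_unit => // u; rewrite mxE big_ord0 => /eqP.
by rewrite eq_sym oner_eq0.
Qed.

Lemma rank_one_projector : is_projector (psi *m adjmx psi).
Proof.
split; first by rewrite /is_hermitian adjmxM adjmxK.
by rewrite mulmxA -(mulmxA psi) adjmx_mul_unit mulmx1.
Qed.

Lemma mxtrace_rank_one : \tr (psi *m adjmx psi) = 1.
Proof. by rewrite mxtrace_mulC adjmx_mul_unit mxtrace1. Qed.

End UnitVector.

Lemma orthonormal_pair_dim_gt1 d (u v : 'cV[C]_d) :
  (adjmx u *m u) 0 0 = 1 -> (adjmx v *m v) 0 0 = 1 ->
  (adjmx u *m v) 0 0 = 0 -> (1 < d)%N.
Proof.
move=> u_unit v_unit; have := unit_vector_dim_gt0 u_unit.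
case: d u v u_unit v_unit => [//|[|//]] u v.
rewrite !mxE !big_ord1 !mxE => u_unit v_unit _ /eqP.
rewrite mulf_eq0 conjC_eq0 => /orP[] /eqP u0.
  by move: u_unit; rewrite u0 conjC0 mul0r => /eqP; rewrite eq_sym oner_eq0.
by move: v_unit; rewrite u0 mulr0 => /eqP; rewrite eq_sym oner_eq0.
Qed.

Lemma maximally_mixed_density d :
  (0 < d)%N -> is_density (((d%:R : R)^-1)%:C%C%:M : 'M[C]_d).
Proof.
move=> d_gt0; set c := ((d%:R : R)^-1)%:C%C.
have c_ge0 : 0 <= c by rewrite ler0c invr_ge0 ler0n.
split; first by apply: adjmx_scalar_real; apply: ger0_real.
split.
  move=> u; rewrite mul_mx_scalar -scalemxAl mxE.
  exact: mulr_ge0 c_ge0 (adjmx_mul_ge0 u).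
rewrite mxtrace_scalar /c fmorphV rmorph_nat -[_^-1]mulr1 -mulrnAr mulVf //.
by rewrite pnatr_eq0 -lt0n.
Qed.

End ComplexMatrices.

Lemma orthogonal_representation_comap (R : realType) (X V : finType)
    (eX : rel X) (eV : rel V) (g : V -> X) (d : nat) (psi : X -> 'cV[R[i]]_d) :
  (forall v w, eV v w -> eX (g v) (g w)) ->
  orthogonal_representation eX psi -> orthogonal_representation eV (psi \o g).
Proof.
move=> gE [psi_unit psi_orth].
by split=> [v | v w /gE]; [apply: psi_unit | apply: psi_orth].
Qed.

Lemma uniform_quantum_behavior (R : realType) (V : finType) (e : rel V)
    (d : nat) (psi : V -> 'cV[R[i]]_d) :
  (0 < d)%N -> orthogonal_representation e psi ->
  quantum_behavior e (fun=> (d%:R : R)^-1).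
Proof.
move=> d_gt0 [psi_unit psi_orth]; split.
  split=> [v | v w /psi_orth vw_orth].
    by rewrite invr_ge0 ler0n /= invf_le1 ?ltr0n // ler1n.
  have d_gt1 := orthonormal_pair_dim_gt1 (psi_unit v) (psi_unit w) vw_orth.
  by rewrite /= -mulr2n -[_ *+ 2]mulr_natl ler_pdivrMr ?ltr0n // mul1r ler_nat.
exists d, (((d%:R : R)^-1)%:C%C%:M), (fun v => psi v *m adjmx (psi v)).
split; first exact: maximally_mixed_density.
split; first by move=> v; apply: rank_one_projector.
split=> [v w /psi_orth vw_orth | v].
  have vw0 : adjmx (psi v) *m psi w = 0.
    by apply/matrixP => i j; rewrite !ord1 vw_orth mxE.
  by rewrite mulmxA -(mulmxA (psi v)) vw0 mulmx0 mul0mx.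
by rewrite mul_scalar_mx mxtraceZ mxtrace_rank_one // mulr1.
Qed.

Lemma classical_behavior_comap (R : realType) (X V : finType)
    (eX : rel X) (eV : rel V) (f : X -> V) (p : V -> R) :
  (forall x y, eX x y -> eV (f x) (f y)) ->
  classical_behavior eV p -> classical_behavior eX (p \o f).
Proof.
move=> fE [[p01 p_edge] [dT [T [mu [A [A_meas [A_disj A_mu]]]]]]].
split; first by split=> [x | x y /fE]; [apply: p01 | apply: p_edge].
exists dT, T, mu, (A \o f); split=> [x | ]; first exact: A_meas.
by split=> [x y /fE | x]; [apply: A_disj | apply: A_mu].
Qed.

Lemma independent_card_le (V : finType) (e : rel V) (S : {set V}) :
  independent e S -> (#|S| <= independence_number e)%N.
Proof. exact: leq_bigmax_cond. Qed.

Lemma sum_indic_le_independence_number (R : realType) (T : Type)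
    (V : finType) (e : rel V) (A : V -> set T) :
  (forall v w, e v w -> (A v `&` A w = set0)%classic) ->
  forall t, \sum_v (\1_(A v) t : R) <= (independence_number e)%:R.
Proof.
move=> A_disj t; set S := [set v | t \in A v].
have -> : \sum_v (\1_(A v) t : R) = #|S|%:R.
  rewrite (bigID (mem S)) /= [X in _ + X]big1 ?addr0; last first.
    by move=> v; rewrite inE indicE => /negbTE ->.
  by rewrite (eq_bigr (fun=> 1)) ?sumr_const // => v; rewrite inE indicE => ->.
rewrite ler_nat; apply: independent_card_le.
apply/forallP => v; apply/implyP; rewrite inE => tAv.
apply/forallP => w; apply/implyP; rewrite inE => tAw.
apply/negP => /A_disj; rewrite -subset0 => /(_ t); apply.
by move: tAv tAw; rewrite !inE.
Qed.

Lemma sum_measure_le_independence_number (R : realType) (dT : measure_display)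
    (T : measurableType dT) (mu : probability T R) (V : finType) (e : rel V)
    (A : V -> set T) :
  (forall v, measurable (A v)) ->
  (forall v w, e v w -> (A v `&` A w = set0)%classic) ->
  (\sum_v mu (A v) <= (independence_number e)%:R%:E)%E.
Proof.
move=> A_meas A_disj.
pose F t := (\sum_v (\1_(A v) t : R)%:E)%E.
have indic_meas : forall v, measurable_fun setT (EFin \o (\1_(A v) : T -> R)).
  by move=> v; apply/measurableT_comp => //; exact: measurable_indic.
have <- : (\int[mu]_(t in setT) F t = \sum_v mu (A v))%E.
  rewrite ge0_integral_sum //; apply: eq_bigr => v _.
  by rewrite integral_indic // setIT.
apply: (@le_trans _ _ (\int[mu]_(t in setT) (independence_number e)%:R%:E)%E).
  apply: ge0_le_integral => //.
  - by move=> t _; apply: sume_ge0 => v _; rewrite lee_fin.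
  - exact: emeasurable_sum.
  - by move=> t _; rewrite /F sumEFin lee_fin sum_indic_le_independence_number.
by rewrite integral_cst // [X in (_ * X)%E]probability_setT mule1.
Qed.

Lemma classical_behavior_sum_le (R : realType) (V : finType) (e : rel V)
    (p : V -> R) :
  classical_behavior e p -> \sum_v p v <= (independence_number e)%:R.
Proof.
move=> [_ [dT [T [mu [A [A_meas [A_disj A_mu]]]]]]].
rewrite -lee_fin -sumEFin -(eq_bigr _ (fun v _ => A_mu v)).
exact: sum_measure_le_independence_number.
Qed.

Theorem theorem2 (R : realType) (X Y : finType) (P : X -> Y -> R)
    (V : finType) (e : rel V) :
  is_channel P ->
  graph_iso (confusable P) e ->
  classical_eq_quantum R e ->
  forall (d : nat) (psi : X -> 'cV[R[i]]_d),
    orthogonal_representation (confusable P) psi ->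
    (#|X| <= independence_number (confusable P) * d)%N.
Proof.
move=> _ [f [[g _ gK] fE]] CQ d psi psi_rep.
have f_hom x y : confusable P x y -> e (f x) (f y) by rewrite fE.
have g_hom v w : e v w -> confusable P (g v) (g w) by rewrite fE !gK.
have [-> // | /card_gt0P [x0 _]] := posnP #|X|.
have d_gt0 := unit_vector_dim_gt0 (psi_rep.1 x0).
have /CQ uniform_classical :=
  uniform_quantum_behavior d_gt0 (orthogonal_representation_comap g_hom psi_rep).
have := classical_behavior_sum_le (classical_behavior_comap f_hom uniform_classical).
by rewrite sumr_const -[_ *+ #|_|]mulr_natl ler_pdivrMr ?ltr0n // -natrM ler_nat.
Qed.
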